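(* Let $\mathbb{F}$ be a field, $d\geq3$ and $V$ a vector space over $\mathbb{F}$ of dimension $d+1$. Let $E^*_0,\dots,E^*_d$ be a system of mutually orthogonal idempotents in $\mathrm{End}(V)$ and $A\in\mathrm{End}(V)$ with $E^*_iAE^*_j=0$ if $|i-j|>1$ and $E^*_iAE^*_j\neq0$ if $|i-j|=1$. Assume $A$ is multiplicity-free and bipartite with primitive idempotents $E_0,\dots,E_d$ and eigenvalues $\theta_0,\dots,\theta_d$. Let $\theta^*_0,\dots,\theta^*_d\in\mathbb{F}$ be mutually distinct and $A^*=\sum_i\theta^*_iE^*_i$. Assume $(E_0,E_1)$ is a tail and that the indexing is such that $E_2$ is the vertex of $\Delta$ other than $E_0$ adjacent to $E_1$. Fix a basis $v_0,\dots,v_d$ with $v_i\in E^*_iV$ and let $b_i,c_i,\alpha_i$ be as in the context. Let $a^*_i=\operatorname{tr}(E_iA^* )$, and let $b^*_0c^*_1$ be as in the context. Put $\psi=\theta^*_1+\theta^*_0-a^*_1-a^*_0$ and $\zeta=a^*_0a^*_1-b^*_0c^*_1-\theta^*_0\theta^*_1$. Then for $0\le i\le d$, $$c_i(\theta^*_{i-1}-\theta^*_0)(\theta^*_{i-1}-\theta^*_1)\alpha_{i-1}+b_i(\theta^*_{i+1}-\theta^*_0)(\theta^*_{i+1}-\theta^*_1)\alpha_{i+1}=\theta_2(\theta^*_i-\theta^*_0)(\theta^*_i-\theta^*_1)\alpha_i+(\theta_2-\theta_1)\psi\theta^*_i\alpha_i+(\theta_1-\theta_0)\psi a^*_0\alpha_i+(\theta_2-\theta_0)\zeta\alpha_i,$$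 where for $i=0$ the first term on the left (with coefficient $c_0=0$) and for $i=d$ the second term on the left (with coefficient $b_d=0$) are omitted.
   Context: A system of mutually orthogonal idempotents: $E^*_iE^*_j=\delta_{ij}E^*_i$, $\operatorname{rank}E^*_i=1$. $A$ multiplicity-free: $d+1$ distinct eigenvalues in $\mathbb{F}$; $E_i$ is the projection onto the $\theta_i$-eigenspace along the other eigenspaces. Bipartite: $\operatorname{tr}(E^*_iA)=0$ for all $i$. $\Delta$: graph on $E_0,\dots,E_d$ with $E_i\neq E_j$ adjacent iff $E_iA^*E_j\neq0$. $(E_0,E_1)$ is a tail if $E_0$ is adjacent to no vertex other than $E_1$ and $E_1$ is adjacent to at most one vertex other than $E_0$. The matrix $Y$ representing a map $X$ w.r.t. a basis $u_0,\dots,u_d$ satisfies $Xu_j=\sum_iY_{ij}u_i$. For the fixed basis $v_i\in E^*_iV$, the matrix of $A$ is tridiagonal with zero diagonal; $b_i$ ($0\le i\le d-1$) is its $(i,i+1)$-entry and $c_i$ ($1\le i\le d$) its $(i,i-1)$-entry; set $b_d=c_0=0$. The cosine sequence $\alpha_0,\dots,\alpha_d$ for $\theta_0$: $\alpha_0=1$ and $c_i\alpha_{i-1}+b_i\alpha_{i+1}=\theta_0\alpha_i$ for $0\le i\le d-1$ (equivalently $\sum_i\alpha_iv_i$ is the eigenvector of $A$ for $\theta_0$ with $\alpha_0=1$). For any basis $w_0,\dots,w_d$ with $w_i\in E_iV$, let $b^*_0$ and $c^*_1$ be the $(0,1)$- and $(1,0)$-entries of the matrix representing $A^*$; the product $b^*_0c^*_1$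 does not depend on this choice. *)

From mathcomp Require Import all_boot all_order all_algebra.
Set Implicit Arguments. Unset Strict Implicit. Unset Printing Implicit Defensive.
Import GRing.Theory.
Local Open Scope ring_scope.

(* V = 'cV[F]_(d.+1) (column vectors), End(V) = 'M[F]_(d.+1) acting on the left.
   Families indexed by 0..d are given as functions on nat (only indices <= d matter). *)

Definition basis_mx (F : fieldType) (n : nat) (u : nat -> 'cV[F]_n) : 'M[F]_n :=
  \matrix_(r < n, j < n) u (nat_of_ord j) r 0.

(* Matrix Y representing X w.r.t. the basis u (X u_j = sum_i Y_ij u_i). *)
Definition rep_mx (F : fieldType) (n : nat) (u : nat -> 'cV[F]_n) (X : 'M[F]_n)
  : 'M[F]_n := invmx (basis_mx u) *m X *m basis_mx u.

Definition dual_mx (F : fieldType) (d : nat) (ths : nat -> F)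
  (Es : nat -> 'M[F]_d.+1) : 'M[F]_d.+1 :=
  \sum_(i < d.+1) ths i *: Es i.

Definition bcoef (F : fieldType) (d : nat) (v : nat -> 'cV[F]_d.+1)
  (A : 'M[F]_d.+1) (i : nat) : F :=
  if (i < d)%N then rep_mx v A (inord i) (inord i.+1) else 0.
Definition ccoef (F : fieldType) (d : nat) (v : nat -> 'cV[F]_d.+1)
  (A : 'M[F]_d.+1) (i : nat) : F :=
  if ((0 < i) && (i <= d))%N then rep_mx v A (inord i) (inord i.-1) else 0.

(* In the basis w_i of the E_iV the tail condition kills the entries of rows 0 and 1 of
   the matrix of A* beyond columns 1 and 2, whereas the computation needs the columns:
   A* w_0 in <w_0, w_1> and A* w_1 in <w_0, w_1, w_2>.  Rows and columns are exchanged by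
   a nondegenerate bilinear form for which A and A* are both self-adjoint.  In the basis
   v_i the tridiagonal matrix of A is symmetrized by a diagonal matrix, which also
   commutes with the diagonal matrix of A*.  Transported to the basis w_i, this form
   commutes with the diagonal matrix of A, whose entries th_i are distinct, so it is
   diagonal there, and the matrix of A* has the same zero pattern on rows and columns.
   Expanding with these two columns gives
     A (A* - th*_0)(A* - th*_1) w_0 = th_2 (A* - th*_0)(A* - th*_1) w_0
        + (th_2 - th_1) psi A* w_0 + ((th_1 - th_0) psi a*_0 + (th_2 - th_0) zeta) w_0.
   In the basis v_i, A* is diag(th*_i) and A acts by c_i, b_i; the coordinates of w_0
   satisfy the recurrence defining the cosine sequence, so they are alpha_i times a
   nonzero constant, and the i-th coordinate of the identity above is the claim. *)

From mathcomp Require Import all_boot all_order all_algebra.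
From mathcomp Require Import ring zify.
Set Implicit Arguments.
Unset Strict Implicit.
Unset Printing Implicit Defensive.
Import GRing.Theory.
Local Open Scope ring_scope.

Section MatrixEntries.
Variables (F : fieldType) (n : nat).

Lemma delta_mx_sandwich (Y : 'M[F]_n) (i j : 'I_n) :
  delta_mx i i *m Y *m delta_mx j j = Y i j *: delta_mx i j.
Proof.
apply/matrixP => r c; rewrite !mxE (bigD1 j) //= big1 => [|k /negbTE nkj]; last first.
  by rewrite !mxE nkj mulr0.
rewrite addr0 !mxE (bigD1 i) //= big1 => [|l /negbTE nli]; last first.
  by rewrite !mxE nli andbF mul0r.
rewrite !mxE !eqxx !andbT !addr0.
by case: (r == i); case: (c == j); rewrite /= ?mul1r ?mulr1 ?mul0r ?mulr0.
Qed.

Lemma mxtrace_delta_mul (Y : 'M[F]_n) (i : 'I_n) : \tr (delta_mx i i *m Y) = Y i i.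
Proof.
rewrite /mxtrace (bigD1 i) //= big1 => [|k /negbTE nki]; last first.
  by rewrite mxE big1 // => l _; rewrite mxE nki mul0r.
rewrite mxE (bigD1 i) //= big1 => [|l /negbTE nli]; rewrite mxE ?eqxx ?mul1r ?addr0 //.
by rewrite nli mul0r.
Qed.

Lemma diag_mulmx_entry (t : 'I_n -> F) (y : 'cV[F]_n) (r : 'I_n) :
  (diag_mx (\row_j t j) *m y) r 0 = t r * y r 0.
Proof. by rewrite mul_diag_mx !mxE. Qed.

Lemma diag_shift_mulmx_entry (t : 'I_n -> F) (s : F) (y : 'cV[F]_n) (r : 'I_n) :
  ((diag_mx (\row_j t j) - s%:M) *m y) r 0 = (t r - s) * y r 0.
Proof. by rewrite mulmxBl mul_scalar_mx mxE diag_mulmx_entry !mxE mulrBl. Qed.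

Lemma lincomb3_entry (a1 a2 a3 : F) (y1 y2 y3 : 'cV[F]_n) (r : 'I_n) :
  (a1 *: y1 + a2 *: y2 + a3 *: y3) r 0 = a1 * y1 r 0 + a2 * y2 r 0 + a3 * y3 r 0.
Proof. by rewrite !mxE. Qed.

End MatrixEntries.

Section RepMx.
Variables (F : fieldType) (n : nat) (u : nat -> 'cV[F]_n).

Lemma basis_mx_delta (j : 'I_n) : basis_mx u *m delta_mx j 0 = u j.
Proof. by rewrite -colE; apply/matrixP => r c; rewrite !mxE (ord1 c). Qed.

Hypothesis u_basis : basis_mx u \in unitmx.

Lemma basis_vec_neq0 (j : 'I_n) : u j != 0.
Proof.
apply: contraTneq u_basis => uj0; rewrite -(basis_mx_delta j) in uj0.
apply/negP => /mulKmx /(_ (delta_mx j (0 : 'I_1))); rewrite uj0 mulmx0 => /matrixP /(_ j 0).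
by rewrite !mxE !eqxx => /esym/eqP; rewrite oner_eq0.
Qed.

Lemma rep_mxM (X Z : 'M[F]_n) : rep_mx u (X *m Z) = rep_mx u X *m rep_mx u Z.
Proof. by rewrite /rep_mx !mulmxA mulmxK. Qed.

Lemma rep_mx_eq0 (X : 'M[F]_n) : (rep_mx u X == 0) = (X == 0).
Proof.
apply/eqP/eqP => [|->]; last by rewrite /rep_mx mulmx0 mul0mx.
move=> /(congr1 (fun Y => basis_mx u *m Y *m invmx (basis_mx u))).
by rewrite /rep_mx mulmx0 mul0mx !mulmxA mulmxV // mul1mx mulmxK.
Qed.

Lemma mxtrace_rep_mx (X : 'M[F]_n) : \tr (rep_mx u X) = \tr X.
Proof. by rewrite /rep_mx mxtrace_mulC mulKVmx. Qed.

Lemma rep_mx_mulmx (X : 'M[F]_n) (x : 'cV[F]_n) :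
  rep_mx u X *m (invmx (basis_mx u) *m x) = invmx (basis_mx u) *m (X *m x).
Proof. by rewrite /rep_mx !mulmxA mulmxK. Qed.

Lemma mulmx_basis_rep (X : 'M[F]_n) (j : 'I_n) :
  X *m u j = \sum_(r < n) rep_mx u X r j *: u r.
Proof.
have -> : X *m u j = basis_mx u *m col j (rep_mx u X).
  by rewrite colE /rep_mx -!mulmxA mulKVmx // basis_mx_delta.
rewrite [col j _]matrix_sum_delta mulmx_sumr; apply: eq_bigr => r _.
by rewrite big_ord1 -scalemxAr basis_mx_delta mxE.
Qed.

Lemma invmx_basis_vec (j : 'I_n) : invmx (basis_mx u) *m u j = delta_mx j 0.
Proof. by rewrite -basis_mx_delta mulKmx. Qed.

Lemma rep_mx_col (X : 'M[F]_n) (j : 'I_n) :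
  col j (rep_mx u X) = invmx (basis_mx u) *m (X *m u j).
Proof. by rewrite colE /rep_mx -!mulmxA basis_mx_delta. Qed.

Lemma rep_mx_eigen (X : 'M[F]_n) (s : 'I_n -> F) :
  (forall j : 'I_n, X *m u j = s j *: u j) -> rep_mx u X = diag_mx (\row_j s j).
Proof.
move=> hX; apply/matrixP => r j; have /colP/(_ r) := rep_mx_col X j.
rewrite hX -scalemxAr invmx_basis_vec !mxE eqxx andbT mulr_natr => ->.
by case: eqP => [->|].
Qed.

Lemma rep_mx_proj (X : 'M[F]_n) (i : 'I_n) :
  (forall j : 'I_n, X *m u j = if j == i then u j else 0) ->
  rep_mx u X = delta_mx i i.
Proof.
move=> hX; rewrite (@rep_mx_eigen _ (fun j => (j == i)%:R)) => [|j]; last first.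
  by rewrite hX; case: eqP; rewrite ?scale1r ?scale0r.
apply/matrixP => r j; rewrite !mxE.
by case: (eqVneq r i) => [->|_]; case: (eqVneq j i) => _; rewrite /= ?mul0rn.
Qed.

Lemma rep_mx_entry_eq0 (X B Z : 'M[F]_n) (i j : 'I_n) :
  rep_mx u X = delta_mx i i -> rep_mx u Z = delta_mx j j ->
  (rep_mx u B i j == 0) = (X *m B *m Z == 0).
Proof.
move=> hX hZ; rewrite -rep_mx_eq0 !rep_mxM hX hZ delta_mx_sandwich scaler_eq0.
suff -> : (delta_mx i j == 0 :> 'M[F]_n) = false by rewrite orbF.
by apply/eqP => /matrixP /(_ i j); rewrite !mxE !eqxx => /eqP; rewrite oner_eq0.
Qed.

Lemma mxtrace_rep_proj (X B : 'M[F]_n) (i : 'I_n) :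
  rep_mx u X = delta_mx i i -> \tr (X *m B) = rep_mx u B i i.
Proof. by move=> hX; rewrite -mxtrace_rep_mx rep_mxM hX mxtrace_delta_mul. Qed.

End RepMx.

Section Symmetrizer.
Variables (F : fieldType) (n : nat).

Lemma conj_symmetrizer (T Ti X S : 'M[F]_n) : T *m Ti = 1%:M ->
  X *m S = S *m X^T ->
  (Ti *m X *m T) *m (Ti *m S *m Ti^T) = (Ti *m S *m Ti^T) *m (Ti *m X *m T)^T.
Proof.
move=> hT hXS; rewrite !trmx_mul !mulmxA -(mulmxA _ T Ti) hT mulmx1.
by rewrite -(mulmxA _ X S) hXS -(mulmxA _ Ti^T) -trmx_mul hT trmx1 mulmx1 !mulmxA.
Qed.

Lemma commute_diag_mx_is_diag (s : 'rV[F]_n) (G : 'M[F]_n) : injective (s 0) ->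
  diag_mx s *m G = G *m diag_mx s -> is_diag_mx G.
Proof.
move=> s_inj sG; apply/is_diag_mxP => r j nrj; move/matrixP: sG => /(_ r j).
rewrite mul_mx_diag mul_diag_mx !mxE mulrC => /eqP; rewrite -subr_eq0 -mulrBr mulf_eq0.
case/orP => [/eqP //|]; rewrite subr_eq0 => /eqP /s_inj rj.
by rewrite rj eqxx in nrj.
Qed.

Lemma symmetrized_entry_eq0 (M : 'M[F]_n) (g : 'rV[F]_n) (i j : 'I_n) :
  diag_mx g \in unitmx -> M *m diag_mx g = diag_mx g *m M^T ->
  M i j = 0 -> M j i = 0.
Proof.
move=> gU Mg Mij; move/matrixP: Mg => /(_ j i).
rewrite mul_mx_diag mul_diag_mx !mxE Mij mulr0 => /eqP; rewrite mulf_eq0 => /orP[/eqP //|gi0].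
by move: gU; rewrite unitmxE det_diag unitfE (bigD1 i) //= mulf_eq0 gi0.
Qed.

End Symmetrizer.

Section Tridiagonal.
Variables (F : fieldType) (n : nat).

Definition tridiag_mx (Y : 'M[F]_n.+1) :=
  forall r j : 'I_n.+1, (r.+1 < j)%N || (j.+1 < r)%N -> Y r j = 0.

Lemma tridiag_symmetrizer (Y : 'M[F]_n.+1) : tridiag_mx Y ->
  (forall r j : 'I_n.+1, j = r.+1 :> nat -> Y r j != 0 /\ Y j r != 0) ->
  exists2 k : 'rV[F]_n.+1, diag_mx k \in unitmx & Y *m diag_mx k = diag_mx k *m Y^T.
Proof.
move=> Ytri Ynz.
(* kap (r + 1) / kap r = Y (r + 1) r / Y r (r + 1) balances the entries (r, r + 1), (r + 1, r). *)
pose kap (j : nat) := \prod_(l < j) (Y (inord l.+1) (inord l) / Y (inord l) (inord l.+1)).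
have kapS (r j : 'I_n.+1) : j = r.+1 :> nat -> kap j = kap r * (Y j r / Y r j).
  move=> jr; rewrite /kap jr big_ord_recr /= inord_val.
  by have -> : inord r.+1 = j by apply/val_inj; rewrite /= inordK -jr.
exists (\row_j kap j).
  rewrite unitmxE det_diag unitfE; apply/prodf_neq0 => j _; rewrite mxE.
  apply/prodf_neq0 => l _; have lj := ltn_ord l.
  have ln : (l.+1 < n.+1)%N by apply: leq_trans (ltn_ord j).
  have [] := Ynz (inord l) (inord l.+1); first by rewrite /= !inordK // ltnW.
  by move=> ? ?; rewrite mulf_neq0 ?invr_neq0.
apply/matrixP => r j; rewrite mul_mx_diag mul_diag_mx !mxE.
wlog rj : r j / (r <= j)%N => [sym|].
  by case: (leqP r j) => [/sym //|/ltnW/sym jr]; rewrite mulrC -jr mulrC.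
case: (eqVneq (j : nat) r.+1) => [jr|nrj].
  by rewrite (kapS r j jr); field; have [] := Ynz r j jr.
case: (eqVneq r j) => [->|nrj']; first by rewrite mulrC.
rewrite !Ytri ?mulr0 ?mul0r //; apply/orP.
  by left; move: nrj nrj'; rewrite -val_eqE /=; lia.
by right; move: nrj nrj'; rewrite -val_eqE /=; lia.
Qed.

Lemma tridiag_mulmx_inord (Y : 'M[F]_n.+1) (x : 'cV[F]_n.+1) (k : nat) :
  tridiag_mx Y -> (forall r, Y r r = 0) -> (k <= n)%N ->
  (Y *m x) (inord k) 0 =
    (if (0 < k)%N then Y (inord k) (inord k.-1) * x (inord k.-1) 0 else 0)
    + (if (k < n)%N then Y (inord k) (inord k.+1) * x (inord k.+1) 0 else 0).
Proof.
move=> Ytri Ydiag kn.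
rewrite mxE (bigID [pred j : 'I_n.+1 | j.+1 == (inord k : 'I_n.+1) :> nat]) /=.
rewrite [X in _ + X](bigID [pred j : 'I_n.+1 | (inord k : 'I_n.+1).+1 == j :> nat]) /=.
rewrite [X in _ + (_ + X)]big1 ?addr0 => [|j /andP [nj1 nj2]]; last first.
  case: (eqVneq j (inord k)) => [->|njk]; first by rewrite Ydiag mul0r.
  rewrite Ytri ?mul0r //; move: nj1 nj2 njk; rewrite -val_eqE /=; lia.
rewrite !inordK //; congr (_ + _).
  case: k kn => [|k] kn /=; first by rewrite big_pred0.
  by apply: big_pred1 => j /=; rewrite eqSS -val_eqE /= inordK // ltnW.
case: ltnP => kn'.
  by apply: big_pred1 => j /=; rewrite -val_eqE /= inordK //; apply/andP/eqP; lia.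
by rewrite big_pred0 // => j; apply/negbTE; have := ltn_ord j; lia.
Qed.

Lemma three_term_rec_eq (c b : nat -> F) (t : F) (f g : nat -> F) :
  (forall i, (i < n)%N -> b i != 0) ->
  (forall i, (i < n)%N -> c i * f i.-1 + b i * f i.+1 = t * f i) ->
  (forall i, (i < n)%N -> c i * g i.-1 + b i * g i.+1 = t * g i) ->
  f 0%N = g 0%N -> forall k, (k <= n)%N -> f k = g k.
Proof.
move=> bnz frec grec fg0.
have step i : (i < n)%N -> f i.-1 = g i.-1 -> f i = g i -> f i.+1 = g i.+1.
  move=> i_n fg1 fg; apply: (mulfI (bnz i i_n)); apply: (addrI (c i * f i.-1)).
  by rewrite frec // fg {1}fg1 grec.
suff fg k : (k <= n)%N -> f k = g k /\ f k.-1 = g k.-1 by move=> k /fg [].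
elim: k => [|k IH] kn //; have [fgk fgk1] := IH (ltnW kn); split=> //; exact: step.
Qed.

End Tridiagonal.

Section TailIdentity.
Variables (F : fieldType) (n : nat) (A S : 'M[F]_n) (w0 w1 w2 : 'cV[F]_n).
Variables (t0 t1 t2 a0 a1 m01 m10 m21 s0 s1 : F).
Hypotheses (Aw0 : A *m w0 = t0 *: w0) (Aw1 : A *m w1 = t1 *: w1) (Aw2 : A *m w2 = t2 *: w2).
Hypotheses (Sw0 : S *m w0 = a0 *: w0 + m10 *: w1)
           (Sw1 : S *m w1 = m01 *: w0 + a1 *: w1 + m21 *: w2).

Lemma tail_identity :
  A *m ((S - s0%:M) *m ((S - s1%:M) *m w0)) =
  t2 *: ((S - s0%:M) *m ((S - s1%:M) *m w0))
  + ((t2 - t1) * (s1 + s0 - a1 - a0)) *: (S *m w0)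
  + ((t1 - t0) * (s1 + s0 - a1 - a0) * a0
     + (t2 - t0) * (a0 * a1 - m01 * m10 - s0 * s1)) *: w0.
Proof.
pose phi x y z := x *: w0 + y *: w1 + z *: w2.
have phiD x y z x' y' z' : phi x y z + phi x' y' z' = phi (x + x') (y + y') (z + z').
  by rewrite /phi !scalerDl addrACA (addrACA (x *: w0)).
have phiZ k x y z : k *: phi x y z = phi (k * x) (k * y) (k * z).
  by rewrite /phi !scalerDr !scalerA.
have phiN x y z : - phi x y z = phi (- x) (- y) (- z).
  by rewrite -scaleN1r phiZ !mulN1r.
have phiA x y z : A *m phi x y z = phi (t0 * x) (t1 * y) (t2 * z).
  by rewrite /phi !mulmxDr -!scalemxAr Aw0 Aw1 Aw2 !scalerA !(mulrC t0, mulrC t1, mulrC t2).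
have Sw0' : S *m w0 = phi a0 m10 0 by rewrite Sw0 /phi scale0r addr0.
have phiS s x y : (S - s%:M) *m phi x y 0 =
    phi (x * a0 + y * m01 - s * x) (x * m10 + y * a1 - s * y) (y * m21).
  rewrite mulmxBl mul_scalar_mx {1}/phi scale0r addr0 mulmxDr -!scalemxAr Sw0'.
  by rewrite [S *m w1]Sw1 -/(phi m01 a1 m21) !phiZ phiN !phiD; congr phi; ring.
have w0E : w0 = phi 1 0 0 by rewrite /phi scale1r !scale0r !addr0.
have Ss1 : (S - s1%:M) *m w0 = phi (a0 - s1) m10 0.
  by rewrite {1}w0E phiS; congr phi; ring.
rewrite Ss1 phiS Sw0' w0E phiA !phiZ !phiD; congr phi; ring.
Qed.

End TailIdentity.

Lemma rep_mx_orth_idem (F : fieldType) (n : nat) (X : nat -> 'M[F]_n.+1)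
    (u : nat -> 'cV[F]_n.+1) :
  basis_mx u \in unitmx ->
  (forall i j, (i <= n)%N -> (j <= n)%N -> X i *m X j = if i == j then X i else 0) ->
  (forall i, (i <= n)%N -> X i *m u i = u i) ->
  forall r : 'I_n.+1, rep_mx u (X r) = delta_mx r r.
Proof.
move=> uB Xorth Xu r; apply: (rep_mx_proj uB) => j.
case: eqP => [->|njr]; first exact/Xu/leq_ord.
by rewrite -(Xu j (leq_ord j)) mulmxA Xorth ?leq_ord // ifN ?mul0mx //; apply/eqP => /val_inj/esym.
Qed.

Section Proposition8p2.
Variables (F : fieldType) (d : nat) (Es E : nat -> 'M[F]_d.+1) (A : 'M[F]_d.+1).
Variables (th ths : nat -> F) (v w : nat -> 'cV[F]_d.+1).
Hypothesis hd : (2 <= d)%N.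
Hypotheses (hEs_orth : forall i j, (i <= d)%N -> (j <= d)%N ->
              Es i *m Es j = (if i == j then Es i else 0))
           (hA0 : forall i j, (i <= d)%N -> (j <= d)%N -> (i.+1 < j)%N || (j.+1 < i)%N ->
              Es i *m A *m Es j = 0)
           (hA1 : forall i, (i < d)%N ->
              Es i *m A *m Es i.+1 != 0 /\ Es i.+1 *m A *m Es i != 0)
           (hbip : forall i, (i <= d)%N -> \tr (Es i *m A) = 0)
           (hv_in : forall i, (i <= d)%N -> Es i *m v i = v i)
           (hv_basis : basis_mx v \in unitmx).
Hypotheses (hth_inj : forall i j, (i <= d)%N -> (j <= d)%N -> th i = th j -> i = j)
           (hE_orth : forall i j, (i <= d)%N -> (j <= d)%N ->
              E i *m E j = (if i == j then E i else 0))
           (hE_eig : forall i, (i <= d)%N -> A *m E i = th i *: E i)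
           (hw_in : forall i, (i <= d)%N -> E i *m w i = w i)
           (hw_basis : basis_mx w \in unitmx).
Hypotheses (htail0 : forall j, (j <= d)%N -> j != 0%N -> j != 1%N ->
              E 0%N *m dual_mx ths Es *m E j = 0)
           (htail1 : forall j, (j <= d)%N -> j != 0%N -> j != 1%N -> j != 2%N ->
              E 1%N *m dual_mx ths Es *m E j = 0).

Local Notation As := (dual_mx ths Es).
Local Notation Y := (rep_mx v A).
Local Notation M := (rep_mx w As).

Lemma rep_v_Es (r : 'I_d.+1) : rep_mx v (Es r) = delta_mx r r.
Proof. exact: rep_mx_orth_idem. Qed.

Lemma rep_w_E (r : 'I_d.+1) : rep_mx w (E r) = delta_mx r r.
Proof. exact: rep_mx_orth_idem. Qed.

Lemma rep_v_A_tridiag : tridiag_mx Y.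
Proof.
move=> r j rj; apply/eqP.
by rewrite (rep_mx_entry_eq0 hv_basis _ (rep_v_Es r) (rep_v_Es j)) hA0 ?leq_ord.
Qed.

Lemma rep_v_A_diag (r : 'I_d.+1) : Y r r = 0.
Proof. by rewrite -(mxtrace_rep_proj hv_basis _ (rep_v_Es r)) hbip ?leq_ord. Qed.

Lemma rep_v_A_adj_neq0 (r j : 'I_d.+1) : j = r.+1 :> nat -> Y r j != 0 /\ Y j r != 0.
Proof.
move=> jr; have rd : (r < d)%N by rewrite -ltnS -jr.
rewrite (rep_mx_entry_eq0 hv_basis _ (rep_v_Es r) (rep_v_Es j)).
by rewrite (rep_mx_entry_eq0 hv_basis _ (rep_v_Es j) (rep_v_Es r)) jr; exact: hA1.
Qed.

Local Notation b := (bcoef v A).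
Local Notation c := (ccoef v A).

Lemma rep_v_A_mulmx_entry (x : 'cV[F]_d.+1) (k : nat) : (k <= d)%N ->
  (Y *m x) (inord k) 0 =
    (if (0 < k)%N then c k * x (inord k.-1) 0 else 0)
    + (if (k < d)%N then b k * x (inord k.+1) 0 else 0).
Proof.
move=> kd; rewrite tridiag_mulmx_inord //; last exact: rep_v_A_diag.
  by rewrite /bcoef /ccoef kd andbT; case: ifP; case: ifP.
exact: rep_v_A_tridiag.
Qed.

Lemma bcoef_neq0 (k : nat) : (k < d)%N -> b k != 0.
Proof.
move=> kd; rewrite /bcoef kd; apply: (proj1 (rep_v_A_adj_neq0 _)).
by rewrite /= !inordK // ltnW.
Qed.

Lemma rep_v_dual : rep_mx v As = diag_mx (\row_j ths j).
Proof.
apply: (rep_mx_eigen hv_basis) => j; rewrite /dual_mx mulmx_suml (bigD1 j) //= big1.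
  by rewrite addr0 -scalemxAl hv_in ?leq_ord.
move=> k /negbTE nkj; rewrite -scalemxAl -(hv_in (leq_ord j)) mulmxA hEs_orth ?leq_ord //.
by rewrite (_ : (k == j :> nat) = false) ?mul0mx ?scaler0 // val_eqE.
Qed.

Lemma rep_w_A : rep_mx w A = diag_mx (\row_j th j).
Proof.
apply: (rep_mx_eigen hw_basis) => j.
by rewrite -(hw_in (leq_ord j)) mulmxA hE_eig ?leq_ord // -scalemxAl.
Qed.

Lemma rep_w_dual_symmetrizer :
  exists2 g : 'rV[F]_d.+1, diag_mx g \in unitmx & M *m diag_mx g = diag_mx g *m M^T.
Proof.
have [kap kapU YK] := tridiag_symmetrizer rep_v_A_tridiag rep_v_A_adj_neq0.
pose T := invmx (basis_mx v) *m basis_mx w; pose Ti := invmx (basis_mx w) *m basis_mx v.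
have TTi : T *m Ti = 1%:M by rewrite /T /Ti mulmxA mulmxK // mulVmx.
have rep_vw X : rep_mx w X = Ti *m rep_mx v X *m T.
  by rewrite /rep_mx /T /Ti !mulmxA !mulmxK.
have DK : rep_mx v As *m diag_mx kap = diag_mx kap *m (rep_mx v As)^T.
  by rewrite rep_v_dual tr_diag_mx diag_mxC.
pose G := Ti *m diag_mx kap *m Ti^T.
have /diag_mxP [g Gg] : is_diag_mx G.
  apply: (@commute_diag_mx_is_diag _ _ (\row_j th j)).
    by move=> r j; rewrite !mxE => /(hth_inj (leq_ord r) (leq_ord j)) /val_inj.
  by have := conj_symmetrizer TTi YK; rewrite -rep_vw rep_w_A tr_diag_mx.
exists g; rewrite -Gg; last by have := conj_symmetrizer TTi DK; rewrite -!rep_vw; apply.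
by rewrite /G /Ti !unitmx_mul unitmx_tr !unitmx_mul kapU !unitmx_inv hv_basis hw_basis.
Qed.

Lemma rep_w_dual_col0 (j : 'I_d.+1) : (2 <= j)%N -> M j (inord 0) = 0.
Proof.
move=> j2; have [g gU Mg] := rep_w_dual_symmetrizer; apply: (symmetrized_entry_eq0 gU Mg).
apply/eqP; rewrite (rep_mx_entry_eq0 hw_basis _ (rep_w_E _) (rep_w_E j)) inordK //.
by apply/eqP/htail0; rewrite ?leq_ord //; lia.
Qed.

Lemma rep_w_dual_col1 (j : 'I_d.+1) : (3 <= j)%N -> M j (inord 1) = 0.
Proof.
move=> j3; have [g gU Mg] := rep_w_dual_symmetrizer; apply: (symmetrized_entry_eq0 gU Mg).
apply/eqP; rewrite (rep_mx_entry_eq0 hw_basis _ (rep_w_E _) (rep_w_E j)) inordK; last lia.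
by apply/eqP/htail1; rewrite ?leq_ord //; lia.
Qed.

Lemma dual_mulmx_w0 :
  As *m w 0%N = M (inord 0) (inord 0) *: w 0%N + M (inord 1) (inord 0) *: w 1%N.
Proof.
have := mulmx_basis_rep hw_basis As (inord 0); rewrite inordK // => ->.
have n10 : (inord 1 : 'I_d.+1) != inord 0 by rewrite -val_eqE /= !inordK //; lia.
rewrite (bigD1 (inord 0)) // (bigD1 (inord 1)) //= big1 ?addr0 ?addrA ?inordK //; try lia.
move=> j /andP [j1 j0]; rewrite rep_w_dual_col0 ?scale0r //.
by move: j1 j0; rewrite -!val_eqE /= !inordK //; lia.
Qed.

Lemma dual_mulmx_w1 :
  As *m w 1%N = M (inord 0) (inord 1) *: w 0%N + M (inord 1) (inord 1) *: w 1%N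
                + M (inord 2) (inord 1) *: w 2%N.
Proof.
have := mulmx_basis_rep hw_basis As (inord 1); rewrite inordK; last lia; move=> ->.
have n10 : (inord 1 : 'I_d.+1) != inord 0 by rewrite -val_eqE /= !inordK //; lia.
have n20 : (inord 2 : 'I_d.+1) != inord 0 by rewrite -val_eqE /= !inordK //; lia.
have n21 : (inord 2 : 'I_d.+1) != inord 1 by rewrite -val_eqE /= !inordK //; lia.
rewrite (bigD1 (inord 0)) // (bigD1 (inord 1)) // (bigD1 (inord 2)) /= ?n20 ?n21 //.
rewrite big1 ?addr0 ?addrA ?inordK //; try lia.
move=> j /andP [/andP [j2 j1] j0]; rewrite rep_w_dual_col1 ?scale0r //.
by move: j2 j1 j0; rewrite -!val_eqE /= !inordK //; lia.
Qed.

Local Notation z k := (invmx (basis_mx v) *m w k).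

Lemma rep_v_A_mulmx_z (k : nat) : (k <= d)%N -> Y *m z k = th k *: z k.
Proof.
move=> kd; rewrite rep_mx_mulmx // -(hw_in kd) mulmxA hE_eig // -scalemxAl.
by rewrite hw_in // scalemxAr.
Qed.

Lemma rep_v_dual_mulmx_z0 :
  rep_mx v As *m z 0%N = M (inord 0) (inord 0) *: z 0%N + M (inord 1) (inord 0) *: z 1%N.
Proof. by rewrite rep_mx_mulmx // dual_mulmx_w0 mulmxDr -!scalemxAr. Qed.

Lemma rep_v_dual_mulmx_z1 :
  rep_mx v As *m z 1%N = M (inord 0) (inord 1) *: z 0%N + M (inord 1) (inord 1) *: z 1%N
                         + M (inord 2) (inord 1) *: z 2%N.
Proof. by rewrite rep_mx_mulmx // dual_mulmx_w1 !mulmxDr -!scalemxAr. Qed.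

Variable alpha : nat -> F.
Hypotheses (halpha0 : alpha 0%N = 1)
           (halpha : forall i, (i < d)%N -> c i * alpha i.-1 + b i * alpha i.+1 = th 0%N * alpha i).

Lemma z0_entry_cosine (k : nat) : (k <= d)%N -> z 0%N (inord k) 0 = alpha k * z 0%N (inord 0) 0.
Proof.
apply: (three_term_rec_eq (c := c) (t := th 0%N) (f := fun k => z 0%N (inord k) 0)
  (g := fun k => alpha k * z 0%N (inord 0) 0) bcoef_neq0) => [i hi|i hi|] /=.
- have := rep_v_A_mulmx_entry (z 0%N) (ltnW hi).
  rewrite rep_v_A_mulmx_z // hi mxE => ->.
  by case: i hi => [|i] hi //=; rewrite /ccoef /= mul0r.
- by rewrite !mulrA -mulrDl halpha.
- by rewrite halpha0 mul1r.
Qed.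

Lemma z0_entry0_neq0 : z 0%N (inord 0) 0 != 0.
Proof.
apply: contraNneq (basis_vec_neq0 hw_basis (inord 0 : 'I_d.+1)) => z00.
have z0 : z 0%N = 0.
  apply/matrixP => r q; rewrite (ord1 q) -(inord_val r).
  by rewrite z0_entry_cosine ?leq_ord // z00 mxE mulr0.
by rewrite inordK // -(mulKVmx hv_basis (w 0%N)) z0 mulmx0.
Qed.

Lemma cosine_tail_identity (i : nat) : (i <= d)%N ->
  let as_ k := \tr (E k *m As) in
  let psi := ths 1%N + ths 0%N - as_ 1%N - as_ 0%N in
  let zeta := as_ 0%N * as_ 1%N - M (inord 0) (inord 1) * M (inord 1) (inord 0)
              - ths 0%N * ths 1%N in
  (if (0 < i)%N then c i * (ths i.-1 - ths 0%N) * (ths i.-1 - ths 1%N) * alpha i.-1 else 0)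
  + (if (i < d)%N then b i * (ths i.+1 - ths 0%N) * (ths i.+1 - ths 1%N) * alpha i.+1 else 0)
  = th 2%N * (ths i - ths 0%N) * (ths i - ths 1%N) * alpha i
    + (th 2%N - th 1%N) * psi * ths i * alpha i
    + (th 1%N - th 0%N) * psi * as_ 0%N * alpha i
    + (th 2%N - th 0%N) * zeta * alpha i.
Proof.
move=> hi as_ psi zeta.
have asE k : (k <= d)%N -> as_ k = M (inord k) (inord k).
  by move=> kd; rewrite /as_ -(mxtrace_rep_proj hw_basis _ (rep_w_E (inord k))) inordK.
have := tail_identity (ths 0%N) (ths 1%N) (rep_v_A_mulmx_z (leq0n d))
  (rep_v_A_mulmx_z (ltnW hd)) (rep_v_A_mulmx_z hd) rep_v_dual_mulmx_z0 rep_v_dual_mulmx_z1.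
move=> /matrixP /(_ (inord i) 0); rewrite rep_v_dual.
rewrite rep_v_A_mulmx_entry // lincomb3_entry !diag_shift_mulmx_entry diag_mulmx_entry.
rewrite /zeta /psi (asE 0%N) // (asE 1%N) ?(ltnW hd) // (z0_entry_cosine hi) (@inordK d i) //.
have cancel a1 a2 b1 b2 : b1 = b2 -> b1 - b2 = (a1 - a2) * z 0%N (inord 0) 0 -> a1 = a2.
  move=> -> /esym/eqP; rewrite subrr mulf_eq0 (negbTE z0_entry0_neq0) orbF subr_eq0.
  by move/eqP.
case i0 : (0 < i)%N; case idd : (i < d)%N => /=; last lia.
all: rewrite ?(@z0_entry_cosine i.-1) ?(@z0_entry_cosine i.+1) ?inordK; try lia.
all: by move=> H; apply: (cancel _ _ _ _ H); ring.
Qed.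

End Proposition8p2.

Theorem proposition8p2 (F : fieldType) (d : nat) (hd : (3 <= d)%N)
  (Es : nat -> 'M[F]_d.+1) (A : 'M[F]_d.+1)
  (E : nat -> 'M[F]_d.+1) (th ths : nat -> F)
  (v : nat -> 'cV[F]_d.+1) (alpha : nat -> F)
  (hEs_orth : forall i j, (i <= d)%N -> (j <= d)%N ->
      Es i *m Es j = (if i == j then Es i else 0))
  (hEs_rank : forall i, (i <= d)%N -> \rank (Es i) = 1%N)
  (hA0 : forall i j, (i <= d)%N -> (j <= d)%N -> (i.+1 < j)%N || (j.+1 < i)%N ->
      Es i *m A *m Es j = 0)
  (hA1 : forall i, (i < d)%N ->
      Es i *m A *m Es i.+1 != 0 /\ Es i.+1 *m A *m Es i != 0)
  (hth_inj : forall i j, (i <= d)%N -> (j <= d)%N -> th i = th j -> i = j)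
  (hE_orth : forall i j, (i <= d)%N -> (j <= d)%N ->
      E i *m E j = (if i == j then E i else 0))
  (hE_sum : \sum_(i < d.+1) E i = 1%:M)
  (hE_nz : forall i, (i <= d)%N -> E i != 0)
  (hE_eig : forall i, (i <= d)%N -> A *m E i = th i *: E i)
  (hbip : forall i, (i <= d)%N -> \tr (Es i *m A) = 0)
  (hths_inj : forall i j, (i <= d)%N -> (j <= d)%N -> ths i = ths j -> i = j)
  (* (E_0, E_1) is a tail and E_2 is the other neighbour of E_1 in Delta *)
  (htail0 : forall j, (j <= d)%N -> j != 0%N -> j != 1%N ->
      E 0%N *m dual_mx ths Es *m E j = 0)
  (htail1 : forall j, (j <= d)%N -> j != 0%N -> j != 1%N -> j != 2%N ->
      E 1%N *m dual_mx ths Es *m E j = 0)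
  (hE12 : E 1%N *m dual_mx ths Es *m E 2%N != 0)
  (hv_in : forall i, (i <= d)%N -> Es i *m v i = v i)
  (hv_basis : basis_mx v \in unitmx)
  (halpha0 : alpha 0%N = 1)
  (halpha : forall i, (i < d)%N ->
      ccoef v A i * alpha i.-1 + bcoef v A i * alpha i.+1 = th 0%N * alpha i) :
  (* b*_0 c*_1 is read off the matrix of A* in an arbitrary basis w_i of the E_iV *)
  forall (w : nat -> 'cV[F]_d.+1),
  (forall i, (i <= d)%N -> E i *m w i = w i) -> basis_mx w \in unitmx ->
  let As := dual_mx ths Es in
  let as_ := fun i => \tr (E i *m As) in
  let bc := rep_mx w As (inord 0) (inord 1) * rep_mx w As (inord 1) (inord 0) in
  let psi := ths 1%N + ths 0%N - as_ 1%N - as_ 0%N in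
  let zeta := as_ 0%N * as_ 1%N - bc - ths 0%N * ths 1%N in
  let b := bcoef v A in
  let c := ccoef v A in
  forall i, (i <= d)%N ->
    (if (0 < i)%N then
       c i * (ths i.-1 - ths 0%N) * (ths i.-1 - ths 1%N) * alpha i.-1 else 0)
    + (if (i < d)%N then
       b i * (ths i.+1 - ths 0%N) * (ths i.+1 - ths 1%N) * alpha i.+1 else 0)
    = th 2%N * (ths i - ths 0%N) * (ths i - ths 1%N) * alpha i
      + (th 2%N - th 1%N) * psi * ths i * alpha i
      + (th 1%N - th 0%N) * psi * as_ 0%N * alpha i
      + (th 2%N - th 0%N) * zeta * alpha i.
Proof.
move=> w hw hwb As as_ bc psi zeta b c i hi.
exact: (cosine_tail_identity (ltnW hd) hEs_orth hA0 hA1 hbip hv_in hv_basis hth_inj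
  hE_orth hE_eig hw hwb htail0 htail1 halpha0 halpha hi).
Qed.
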